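(* Let $\Sigma$ be a smooth surface in $\mathbb{R}^3$ and let $\Gamma$ be a line of curvature on $\Sigma$ whose geodesic curvature on $\Sigma$ is a constant $c\neq 0$. Suppose that the principal curvature of $\Sigma$ along $\Gamma$ (i.e. the normal curvature of $\Sigma$ in the direction tangent to $\Gamma$) does not vanish at any point of $\Gamma$, and that $\Gamma$, regarded as a space curve in $\mathbb{R}^3$, has nowhere vanishing torsion. Then there exists a sphere of radius $\frac{1}{|c|}$ which intersects $\Sigma$ orthogonally along $\Gamma$.
   Context: A line of curvature on $\Sigma$ is a curve whose tangent vector is at every point a principal direction of $\Sigma$. *)

From HB Require Import structures.
From mathcomp Require Import all_boot all_order all_algebra.
From mathcomp Require Import all_classical all_reals all_analysis.
Set Implicit Arguments. Unset Strict Implicit. Unset Printing Implicit Defensive.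
Import Order.TTheory GRing.Theory Num.Theory.
Import numFieldNormedType.Exports.
Local Open Scope ring_scope.
Local Open Scope classical_set_scope.

Section DiffGeo.
Variable R : realType.

Definition dot3 (u v : 'rV[R]_3) : R := \sum_(i < 3) u 0 i * v 0 i.
Definition enorm3 (u : 'rV[R]_3) : R := Num.sqrt (dot3 u u).
Definition cross3 (u v : 'rV[R]_3) : 'rV[R]_3 :=
  \row_(i < 3) (u 0 (i + 1) * v 0 (i + 1 + 1) - u 0 (i + 1 + 1) * v 0 (i + 1)).
Definition det3 (u v w : 'rV[R]_3) : R := dot3 u (cross3 v w).

Fixpoint iterD (V W : normedModType R) (vs : seq V) (f : V -> W) : V -> W :=
  match vs with
  | [::] => f
  | v :: vs' => fun x => derive (iterD vs' f) x v
  end.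

(* C^infinity on a set (meant for open sets): every iterated directional
   derivative exists and is differentiable at each point of U *)
Definition smooth_on (V W : normedModType R) (U : set V) (f : V -> W) : Prop :=
  forall (vs : seq V) (x : V), U x -> differentiable (iterD vs f) x.

Definition e1 : 'rV[R]_2 := \row_(j < 2) (if j == 0 then 1 else 0).
Definition e2 : 'rV[R]_2 := \row_(j < 2) (if j == 0 then 0 else 1).

Definition regular_surface (U : set 'rV[R]_2) (X : 'rV[R]_2 -> 'rV[R]_3) : Prop :=
  open U /\ smooth_on U X /\
  forall x, U x -> cross3 (derive X x e1) (derive X x e2) != 0.

Definition unit_normal (X : 'rV[R]_2 -> 'rV[R]_3) (x : 'rV[R]_2) : 'rV[R]_3 :=
  let n := cross3 (derive X x e1) (derive X x e2) in (enorm3 n)^-1 *: n.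

Definition principal_direction (X : 'rV[R]_2 -> 'rV[R]_3) (x w : 'rV[R]_2) : Prop :=
  derive X x w != 0 /\
  exists k : R, - derive (unit_normal X) x w = k *: derive X x w.

(* normal curvature of the surface at X x in the direction dX_x(w):
   II(w,w)/I(w,w) = - <dN(w), dX(w)> / <dX(w), dX(w)> *)
Definition normal_curvature (X : 'rV[R]_2 -> 'rV[R]_3) (x w : 'rV[R]_2) : R :=
  - dot3 (derive (unit_normal X) x w) (derive X x w)
    / dot3 (derive X x w) (derive X x w).

Definition dern (V : normedModType R) (n : nat) (f : R -> V) : R -> V :=
  derive1n n f.

Definition geodesic_curvature (X : 'rV[R]_2 -> 'rV[R]_3) (alpha : R -> 'rV[R]_2)
  (t : R) : R :=
  let G := X \o alpha in
  dot3 (dern 2 G t) (cross3 (unit_normal X (alpha t)) (dern 1 G t))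
    / (enorm3 (dern 1 G t)) ^+ 3.

Definition torsion (G : R -> 'rV[R]_3) (t : R) : R :=
  det3 (dern 1 G t) (dern 2 G t) (dern 3 G t)
    / (enorm3 (cross3 (dern 1 G t) (dern 2 G t))) ^+ 2.

Definition line_of_curvature (U : set 'rV[R]_2) (X : 'rV[R]_2 -> 'rV[R]_3)
  (I : set R) (alpha : R -> 'rV[R]_2) : Prop :=
  open I /\ is_interval I /\ I !=set0 /\ smooth_on I alpha /\
  (forall t, I t -> U (alpha t)) /\
  (forall t, I t -> principal_direction X (alpha t) (dern 1 alpha t)).

End DiffGeo.

(* Along the curve Gamma = X o alpha, with unit normal N and unit tangent T, the
   vectors N, T and N x T form an orthonormal frame.  Since Gamma is a line of
   curvature, Rodrigues' formula makes N' parallel to Gamma', and the geodesic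
   curvature is the component of T' along N x T divided by |Gamma'|, so
   N x T' = - c Gamma'.  Hence p = Gamma + c^-1 N x T has derivative
   Gamma' + c^-1 N x T' = 0 and is constant on the interval.  Finally
   Gamma - p = - c^-1 N x T has length 1/|c| and is orthogonal to N: the sphere
   of centre p and radius 1/|c| meets the surface orthogonally along Gamma. *)

From HB Require Import structures.
From mathcomp Require Import all_boot all_order all_algebra.
From mathcomp Require Import all_classical all_reals all_analysis.
From mathcomp Require Import ring.
Import Order.TTheory GRing.Theory Num.Theory.
Import numFieldNormedType.Exports.
Set Implicit Arguments. Unset Strict Implicit. Unset Printing Implicit Defensive.
Local Open Scope ring_scope.
Local Open Scope classical_set_scope.

Section Vec3.
Variable R : realType.
Implicit Types (u v n g h : 'rV[R]_3) (a b : R).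

Lemma row3P u v : u 0 0 = v 0 0 -> u 0 1 = v 0 1 -> u 0 2 = v 0 2 -> u = v.
Proof.
move=> e0 e1 e2; apply/rowP => -[[|[|[|//]]] i3].
- by rewrite (_ : Ordinal i3 = 0) //; apply/val_inj.
- by rewrite (_ : Ordinal i3 = 1) //; apply/val_inj.
- by rewrite (_ : Ordinal i3 = 2) //; apply/val_inj.
Qed.

Lemma dot3E u v : dot3 u v = u 0 0 * v 0 0 + u 0 1 * v 0 1 + u 0 2 * v 0 2.
Proof.
rewrite /dot3 !big_ord_recr big_ord0 /= add0r.
by congr (_ * _ + _ * _ + _ * _); congr (_ _ _); apply: val_inj.
Qed.

Lemma cross3E u v : cross3 u v = \row_(i < 3)
  [:: u 0 1 * v 0 2 - u 0 2 * v 0 1; u 0 2 * v 0 0 - u 0 0 * v 0 2;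
      u 0 0 * v 0 1 - u 0 1 * v 0 0]`_i.
Proof.
by apply: row3P; rewrite !mxE /=; congr (_ * _ - _ * _); congr (_ _ _); apply: val_inj.
Qed.

Lemma dot3C u v : dot3 u v = dot3 v u.
Proof. by rewrite !dot3E; ring. Qed.

Lemma dot3Zl a u v : dot3 (a *: u) v = a * dot3 u v.
Proof. by rewrite !dot3E !mxE; ring. Qed.

Lemma dot3Zr a u v : dot3 u (a *: v) = a * dot3 u v.
Proof. by rewrite dot3C dot3Zl dot3C. Qed.

Lemma dot3_cross3_same u v : dot3 u (cross3 u v) = 0.
Proof. by rewrite dot3E cross3E !mxE /=; ring. Qed.

Lemma cross3_colinear a b u : cross3 (a *: u) (b *: u) = 0.
Proof. by apply: row3P; rewrite cross3E !mxE /=; ring. Qed.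

Lemma cross3_dot3_span a b u v : dot3 (cross3 u v) (a *: u + b *: v) = 0.
Proof. by rewrite dot3E cross3E !mxE /=; ring. Qed.

Lemma dot3_ge0 u : 0 <= dot3 u u.
Proof. by rewrite dot3E -!expr2 !addr_ge0 ?sqr_ge0. Qed.

Lemma dot3_eq0 u : (dot3 u u == 0) = (u == 0).
Proof.
apply/idP/eqP => [|->]; last by apply/eqP; rewrite dot3E !mxE; ring.
rewrite dot3E -!expr2 paddr_eq0 ?addr_ge0 ?sqr_ge0 // paddr_eq0 ?sqr_ge0 //.
by rewrite !sqrf_eq0 => /andP[/andP[/eqP u0 /eqP u1] /eqP u2]; apply: row3P; rewrite mxE.
Qed.

Lemma dot3_gt0 u : u != 0 -> 0 < dot3 u u.
Proof. by rewrite lt0r dot3_eq0 dot3_ge0 andbT. Qed.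

Lemma sqr_enorm3 u : enorm3 u ^+ 2 = dot3 u u.
Proof. exact/sqr_sqrtr/dot3_ge0. Qed.

Lemma enorm3_gt0 u : u != 0 -> 0 < enorm3 u.
Proof. by move=> u0; rewrite sqrtr_gt0 dot3_gt0. Qed.

Lemma enorm3Z a u : enorm3 (a *: u) = `|a| * enorm3 u.
Proof. by rewrite /enorm3 dot3Zl dot3Zr mulrA -expr2 sqrtrM ?sqr_ge0 // sqrtr_sqr. Qed.

Lemma enorm3_cross3_orthonormal n u :
  dot3 n n = 1 -> dot3 u u = 1 -> dot3 n u = 0 -> enorm3 (cross3 n u) = 1.
Proof.
have lagrange : dot3 (cross3 n u) (cross3 n u) = dot3 n n * dot3 u u - dot3 n u ^+ 2.
  by rewrite !dot3E cross3E !mxE /=; ring.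
by move=> nn uu nu; rewrite /enorm3 lagrange nn uu nu expr0n subr0 mulr1 sqrtr1.
Qed.

Lemma cross3_orthonormal_decomp n g h : dot3 n n = 1 -> dot3 n g = 0 ->
  dot3 g g *: cross3 n h = dot3 h g *: cross3 n g - dot3 h (cross3 n g) *: g.
Proof.
have expand : (dot3 n n * dot3 g g - dot3 n g ^+ 2) *: cross3 n h =
    (dot3 n n * dot3 h g - dot3 n g * dot3 h n) *: cross3 n g +
    dot3 h (cross3 n g) *: (dot3 n g *: n - dot3 n n *: g).
  by apply: row3P; rewrite !dot3E !cross3E !mxE /=; ring.
move=> nn ng; move: expand; rewrite nn ng expr0n /= subr0 !mul1r mul0r subr0.
by rewrite scale0r scale1r sub0r scalerN.
Qed.

Lemma dot3_normalize u : u != 0 -> dot3 ((enorm3 u)^-1 *: u) ((enorm3 u)^-1 *: u) = 1.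
Proof.
move=> u0; have L0 : enorm3 u != 0 by rewrite gt_eqF ?enorm3_gt0.
by rewrite dot3Zl dot3Zr -sqr_enorm3; field.
Qed.

Lemma cross3_linear_r a b n u v :
  cross3 n (a *: u + b *: v) = a *: cross3 n u + b *: cross3 n v.
Proof. by apply: row3P; rewrite !cross3E !mxE /=; ring. Qed.

(* With g = Gamma', h = Gamma'' and n the unit normal, the vector under the
   cross product is the derivative of the unit tangent; n' is parallel to g
   and contributes nothing, so this says that the sphere centre is stationary. *)
Lemma center_velocity_eq0 c n g h :
  dot3 n n = 1 -> dot3 n g = 0 -> g != 0 -> c != 0 ->
  dot3 h (cross3 n g) / enorm3 g ^+ 3 = c ->
  g + c^-1 *: cross3 n ((- dot3 g h / enorm3 g ^+ 3) *: g + (enorm3 g)^-1 *: h) = 0.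
Proof.
move=> nn ng g0 c0 kg; have L0 : enorm3 g != 0 by rewrite gt_eqF ?enorm3_gt0.
rewrite cross3_linear_r.
have -> : cross3 n h = (enorm3 g ^+ 2)^-1 *:
    (dot3 h g *: cross3 n g - dot3 h (cross3 n g) *: g).
  by rewrite -cross3_orthonormal_decomp // -sqr_enorm3 scalerA mulVf ?expf_neq0 ?scale1r.
have w0 : dot3 h (cross3 n g) != 0 by apply: contra c0; rewrite -kg => /eqP->; rewrite mul0r.
rewrite -kg [dot3 g h]dot3C; move: w0; move: (dot3 h (cross3 n g)) (cross3 n g) => w A w0.
apply/rowP => i; rewrite !mxE.
by field; rewrite L0 w0.
Qed.

End Vec3.

Section CoordinateCalculus.
Variables (R : realType) (V : normedModType R).

Lemma is_derive_mxP m n (f : V -> 'M[R]_(m, n)) x v (df : 'M[R]_(m, n)) :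
  is_derive x v f df <-> forall i j, is_derive x v (fun y => f y i j) (df i j).
Proof.
split=> [[dfxv <-] i j|dfij].
  by apply: DeriveDef; [exact: (derivable_mxP f x v).1 | rewrite derive_mx // mxE].
have dfxv : derivable f x v by apply/derivable_mxP => i j; case: (dfij i j).
apply: DeriveDef => //; rewrite derive_mx //; apply/matrixP => i j.
by rewrite mxE derive_val.
Qed.

Lemma differentiable_mxP m n (f : V -> 'M[R]_(m, n)) x :
  differentiable f x <-> forall i j, differentiable (fun y => f y i j) x.
Proof.
split=> [df i j|dfij]; first exact: differentiable_comp (differentiable_coord _ i j).
rewrite (_ : f = \sum_(i < m) \sum_(j < n) (fun y => f y i j *: delta_mx i j)).
  by apply: differentiable_sum => i; apply: differentiable_sum => j; exact: differentiableZl.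
apply: funext => y; rewrite [LHS]matrix_sum_delta !fct_sumE.
by apply: eq_bigr => i _; rewrite fct_sumE.
Qed.

Implicit Types f g : V -> 'rV[R]_3.

Lemma is_derive_dot3 f g x v a b :
  is_derive x v f a -> is_derive x v g b ->
  is_derive x v (fun y => dot3 (f y) (g y)) (dot3 a (g x) + dot3 (f x) b).
Proof.
move=> /is_derive_mxP fa /is_derive_mxP gb.
rewrite (_ : (fun y => _) = \sum_(i < 3) fun y => f y 0 i * g y 0 i); last first.
  by apply: funext => y; rewrite fct_sumE.
apply: is_derive_eq (is_derive_sum (fun i => is_deriveM (fa 0 i) (gb 0 i))) _.
by rewrite /dot3 -big_split; apply: eq_bigr => i _; rewrite addrC [a 0 i * _]mulrC.
Qed.

Lemma is_derive_cross3 f g x v a b :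
  is_derive x v f a -> is_derive x v g b ->
  is_derive x v (fun y => cross3 (f y) (g y)) (cross3 a (g x) + cross3 (f x) b).
Proof.
move=> /is_derive_mxP fa /is_derive_mxP gb; apply/is_derive_mxP => i j.
rewrite (ord1 i); under eq_fun do rewrite mxE.
apply: is_derive_eq (is_deriveB (is_deriveM (fa 0 _) (gb 0 _))
                                (is_deriveM (fa 0 _) (gb 0 _))) _.
rewrite !mxE; move: (j + 1) (j + 1 + 1) => k l; rewrite -![_ *: _]/(_ * _); ring.
Qed.

Lemma is_derive_scale_row n (k : V -> R) (f : V -> 'rV[R]_n) x v a (b : 'rV[R]_n) :
  is_derive x v k a -> is_derive x v f b ->
  is_derive x v (fun y => k y *: f y) (a *: f x + k x *: b).
Proof.
move=> ka /is_derive_mxP fb; apply/is_derive_mxP => i j.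
under eq_fun do rewrite mxE.
apply: is_derive_eq (is_deriveM ka (fb i j)) _.
by rewrite !mxE addrC; congr (_ + _); exact: mulrC.
Qed.

Lemma differentiable_dot3 f g x :
  differentiable f x -> differentiable g x ->
  differentiable (fun y => dot3 (f y) (g y)) x.
Proof.
move=> /differentiable_mxP df /differentiable_mxP dg.
rewrite (_ : (fun y => _) = \sum_(i < 3) fun y => f y 0 i * g y 0 i); last first.
  by apply: funext => y; rewrite fct_sumE.
by apply: differentiable_sum => i; exact: differentiableM.
Qed.

Lemma differentiable_cross3 f g x :
  differentiable f x -> differentiable g x ->
  differentiable (fun y => cross3 (f y) (g y)) x.
Proof.
move=> /differentiable_mxP df /differentiable_mxP dg; apply/differentiable_mxP => i j.
by under eq_fun do rewrite mxE; apply: differentiableB; apply: differentiableM.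
Qed.

Lemma differentiable_scale_row n (k : V -> R) (f : V -> 'rV[R]_n) x :
  differentiable k x -> differentiable f x -> differentiable (fun y => k y *: f y) x.
Proof.
move=> dk /differentiable_mxP df; apply/differentiable_mxP => i j.
by under eq_fun do rewrite mxE; exact: differentiableM.
Qed.

Lemma differentiable_enorm3V f x : differentiable f x -> f x != 0 ->
  differentiable (fun y => (enorm3 (f y))^-1) x.
Proof.
move=> df fx0; apply: differentiableV; last by rewrite gt_eqF ?enorm3_gt0.
have dsqrt : differentiable Num.sqrt (dot3 (f x) (f x)).
  by apply/derivable1_diffP; case: (is_derive1_sqrt (dot3_gt0 fx0)).
exact: differentiable_comp (differentiable_dot3 df df) dsqrt.
Qed.

End CoordinateCalculus.

Section Curves.
Variable R : realType.

Lemma is_derive_enorm3V (f : R -> 'rV[R]_3) t a : f t != 0 -> is_derive t 1 f a ->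
  is_derive t 1 (fun s => (enorm3 (f s))^-1) (- dot3 (f t) a / enorm3 (f t) ^+ 3).
Proof.
move=> ft0 fa; have L0 : enorm3 (f t) != 0 by rewrite gt_eqF ?enorm3_gt0.
have L' : is_derive t 1 (fun s => enorm3 (f s))
    ((2 * enorm3 (f t))^-1 * (dot3 a (f t) + dot3 (f t) a)).
  exact: is_derive1_comp (is_derive1_sqrt (dot3_gt0 ft0)) (is_derive_dot3 fa fa).
have := is_deriveV (f := fun s => enorm3 (f s)) L0 L'.
move=> /is_derive_eq; apply; rewrite [dot3 a _]dot3C.
move: (enorm3 (f t)) (dot3 (f t) a) L0 => L d L0.
change (- L ^- 2 * ((2 * L)^-1 * (d + d)) = - d / L ^+ 3).
by field.
Qed.

Lemma is_derive_comp_curve (U W : normedModType R) (F : U -> W) (a : R -> U) t :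
  differentiable a t -> differentiable F (a t) ->
  is_derive t 1 (F \o a) (derive F (a t) (derive a t 1)).
Proof.
move=> da dF; apply: DeriveDef; first exact/diff_derivable/differentiable_comp.
rewrite deriveE; last exact: differentiable_comp.
by rewrite diff_comp // !deriveE.
Qed.

Lemma derive_planeE (W : normedModType R) (F : 'rV[R]_2 -> W) x (w : 'rV[R]_2) :
  differentiable F x ->
  derive F x w = w 0 0 *: derive F x (e1 R) + w 0 1 *: derive F x (e2 R).
Proof.
move=> dF; have {1}-> : w = w 0 0 *: e1 R + w 0 1 *: e2 R.
  apply/rowP => -[[|[|//]] j2]; rewrite !mxE /= mulr1 mulr0 ?addr0 ?add0r;
  by congr (w 0 _); apply: val_inj.
by rewrite !deriveE // linearD !linearZ.
Qed.

Lemma is_derive0_cst_on (I : set R) (f : R -> R) : is_interval I ->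
  (forall t, I t -> is_derive t 1 f 0) -> {in I &, forall s t, f s = f t}.
Proof.
move=> Iitv f'0 s t; rewrite !inE /= => Is It.
wlog st : s t Is It / s <= t.
  by move=> H; case: (leP s t) => [|/ltW] st; [|apply/esym]; apply: H.
have stI r : s <= r <= t -> I r := Iitv s t Is It r.
have [|| r _] := @MVT_segment R f (fun=> 0) s t st.
- by move=> r; rewrite in_itv /= => /andP[sr rt]; apply/f'0/stI; rewrite !ltW.
- apply: continuous_in_subspaceT => r; rewrite inE /= in_itv /= => /stI Ir.
  by apply/differentiable_continuous/derivable1_diffP; case: (f'0 r Ir).
- by rewrite mul0r => /eqP; rewrite subr_eq0 => /eqP.
Qed.

Lemma is_derive0_row_cst_on n (I : set R) (f : R -> 'rV[R]_n) : is_interval I ->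
  (forall t, I t -> is_derive t 1 f 0) -> {in I &, forall s t, f s = f t}.
Proof.
move=> Iitv f'0 s t Is It; apply/rowP => j.
apply: (is_derive0_cst_on (f := fun r => f r 0 j) Iitv _ Is It).
by move=> r /f'0 /is_derive_mxP /(_ 0 j); rewrite mxE.
Qed.

End Curves.

Section UnitNormal.
Variables (R : realType) (U : set 'rV[R]_2) (X : 'rV[R]_2 -> 'rV[R]_3).
Hypothesis HX : regular_surface U X.

Lemma differentiable_unit_normal x : U x -> differentiable (unit_normal X) x.
Proof.
have [_ [smoothX Xreg]] := HX; move=> Ux.
have dn := differentiable_cross3 (smoothX [:: e1 R] x Ux) (smoothX [:: e2 R] x Ux).
exact: differentiable_scale_row (differentiable_enorm3V dn (Xreg x Ux)) dn.
Qed.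

Lemma dot3_unit_normal x : U x -> dot3 (unit_normal X x) (unit_normal X x) = 1.
Proof. by have [_ [_ Xreg]] := HX; move=> /Xreg /dot3_normalize. Qed.

Lemma unit_normal_tangent x w : U x -> dot3 (unit_normal X x) (derive X x w) = 0.
Proof.
have [_ [smoothX _]] := HX; move=> Ux.
by rewrite (derive_planeE w (smoothX [::] x Ux)) dot3Zl cross3_dot3_span mulr0.
Qed.

End UnitNormal.

Section LineOfCurvature.
Variables (R : realType) (U : set 'rV[R]_2) (X : 'rV[R]_2 -> 'rV[R]_3).
Variables (I : set R) (alpha : R -> 'rV[R]_2) (c : R).
Hypotheses (HX : regular_surface U X) (Halpha : line_of_curvature U X I alpha).
Hypotheses (c_neq0 : c != 0) (kg_c : forall t, I t -> geodesic_curvature X alpha t = c).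

Local Notation G := (X \o alpha).

Definition unit_tangent t := (enorm3 (dern 1 G t))^-1 *: dern 1 G t.

Definition sphere_center t :=
  G t + c^-1 *: cross3 (unit_normal X (alpha t)) (unit_tangent t).

(* Gamma' by the chain rule: it agrees with dern 1 G on the open set I and is
   visibly differentiable, which yields Gamma''. *)
Let chain_velocity s := dern 1 alpha s 0 0 *: derive X (alpha s) (e1 R) +
                        dern 1 alpha s 0 1 *: derive X (alpha s) (e2 R).

Section AtPoint.
Variable t : R.
Hypothesis It : I t.

Let Ualpha : U (alpha t).
Proof. by have [_ [_ [_ [_ [alphaU _]]]]] := Halpha; exact: alphaU. Qed.

Let principal : principal_direction X (alpha t) (dern 1 alpha t).
Proof. by have [_ [_ [_ [_ [_ pd]]]]] := Halpha; exact: pd. Qed.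

Let dalpha : differentiable alpha t.
Proof. by have [_ [_ [_ [smooth_alpha _]]]] := Halpha; exact: smooth_alpha [::] t It. Qed.

Let dX : differentiable X (alpha t).
Proof. by have [_ [smoothX _]] := HX; exact: smoothX [::] _ Ualpha. Qed.

Let dalpha' : differentiable (dern 1 alpha) t.
Proof.
have [_ [_ [_ [smooth_alpha _]]]] := Halpha.
have -> : dern 1 alpha = fun s => derive alpha s 1.
  by apply/funext => s; rewrite /dern /= derive1E.
exact: smooth_alpha [:: 1] t It.
Qed.

Let dXi (v : 'rV[R]_2) : differentiable (fun s => derive X (alpha s) v) t.
Proof.
by have [_ [smoothX _]] := HX; exact: differentiable_comp dalpha (smoothX [:: v] _ Ualpha).
Qed.

Lemma differentiable_chain_velocity : differentiable chain_velocity t.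
Proof.
have /differentiable_mxP dalpha'ij := dalpha'.
by apply: differentiableD; apply: differentiable_scale_row.
Qed.

Lemma dern1_curveE : dern 1 G t = derive X (alpha t) (dern 1 alpha t).
Proof. by rewrite /dern /= !derive1E; apply: derive_val; exact: is_derive_comp_curve. Qed.

Lemma dern1_curve_chainE : dern 1 G t = chain_velocity t.
Proof. by rewrite dern1_curveE; exact: derive_planeE. Qed.

Lemma is_derive_curve : is_derive t 1 G (dern 1 G t).
Proof. by rewrite dern1_curveE /dern /= derive1E; exact: is_derive_comp_curve. Qed.

Lemma dern1_curve_neq0 : dern 1 G t != 0.
Proof. by rewrite dern1_curveE; case: principal. Qed.

Lemma dot3_unit_normal_curve :
  dot3 (unit_normal X (alpha t)) (unit_normal X (alpha t)) = 1.
Proof. exact: dot3_unit_normal HX _ Ualpha. Qed.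

Lemma unit_normal_dern1_curve : dot3 (unit_normal X (alpha t)) (dern 1 G t) = 0.
Proof. by rewrite dern1_curveE; exact: unit_normal_tangent HX _ _ Ualpha. Qed.

Lemma is_derive_normal_curve :
  exists k, is_derive t 1 (unit_normal X \o alpha) (k *: dern 1 G t).
Proof.
have [_ [k Nk]] := principal; exists (- k).
rewrite dern1_curveE scaleNr -Nk opprK /dern /= derive1E.
exact: is_derive_comp_curve dalpha (differentiable_unit_normal HX Ualpha).
Qed.

End AtPoint.

Lemma is_derive_dern1_curve t : I t -> is_derive t 1 (dern 1 G) (dern 2 G t).
Proof.
move=> It; have [Iopen _] := Halpha.
have nearI : \forall s \near t, chain_velocity s = dern 1 G s.
  by apply: filterS (open_nbhs_nbhs (conj Iopen It)) => s Is; rewrite dern1_curve_chainE.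
have dv : derivable chain_velocity t 1 by exact: diff_derivable (differentiable_chain_velocity It).
have := near_eq_derivable nearI dv.
by move=> /derivableP; rewrite /dern /= derive1E.
Qed.

Lemma is_derive_sphere_center t : I t -> is_derive t 1 sphere_center 0.
Proof.
move=> It; have [k Nk] := is_derive_normal_curve It.
have g0 := dern1_curve_neq0 It; have G'' := is_derive_dern1_curve It.
have T' := is_derive_scale_row (is_derive_enorm3V g0 G'') G''.
have S' := is_deriveD (is_derive_curve It) (is_deriveZ c^-1 (is_derive_cross3 Nk T')).
apply: is_derive_eq S' _; rewrite /unit_tangent cross3_colinear add0r.
exact: center_velocity_eq0 (dot3_unit_normal_curve It) (unit_normal_dern1_curve It)
  g0 c_neq0 (kg_c It).
Qed.

Lemma sphere_center_cst : {in I &, forall s t, sphere_center s = sphere_center t}.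
Proof.
have [_ [Iitv _]] := Halpha; exact: is_derive0_row_cst_on Iitv is_derive_sphere_center.
Qed.

Lemma enorm3_normal_cross_tangent t : I t ->
  enorm3 (cross3 (unit_normal X (alpha t)) (unit_tangent t)) = 1.
Proof.
move=> It; have g0 := dern1_curve_neq0 It.
rewrite enorm3_cross3_orthonormal ?dot3_unit_normal_curve ?dot3_normalize //.
by rewrite /unit_tangent dot3Zr unit_normal_dern1_curve ?mulr0.
Qed.

End LineOfCurvature.

Theorem lemma3p1 (R : realType) (U : set 'rV[R]_2) (X : 'rV[R]_2 -> 'rV[R]_3)
  (I : set R) (alpha : R -> 'rV[R]_2) (c : R) :
  regular_surface U X ->
  line_of_curvature U X I alpha ->
  c != 0 ->
  (forall t, I t -> geodesic_curvature X alpha t = c) ->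
  (forall t, I t -> normal_curvature X (alpha t) (dern 1 alpha t) != 0) ->
  (forall t, I t -> torsion (X \o alpha) t != 0) ->
  exists p : 'rV[R]_3, forall t, I t ->
    enorm3 ((X \o alpha) t - p) = `|c|^-1 /\
    dot3 (unit_normal X (alpha t)) ((X \o alpha) t - p) = 0.
Proof.
move=> HX Halpha c0 kg_c _ _.
have [_ [_ [[t0 It0] _]]] := Halpha.
exists (sphere_center X alpha c t0) => t It.
rewrite (sphere_center_cst HX Halpha c0 kg_c (mem_set It0) (mem_set It)).
rewrite /sphere_center opprD addrA subrr add0r -scaleNr.
split; first by rewrite enorm3Z (enorm3_normal_cross_tangent HX Halpha It) mulr1 normrN normfV.
by rewrite dot3Zr dot3_cross3_same mulr0.
Qed.
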